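(* For $\alpha,\beta\in\mathbb{R}$, let $\mathfrak{z}$ be the center of $\mathfrak{g}(\alpha,\beta)$. The $10$-dimensional quotient Lie algebra $\mathfrak{g}(\alpha,\beta)/\mathfrak{z}$ is characteristically nilpotent if and only if $(\alpha,\beta)\neq(0,0)$.
   Context: For $\alpha,\beta\in\mathbb{R}$, $\mathfrak{g}(\alpha,\beta)$ is the $11$-dimensional real Lie algebra with basis $e_1,\dots,e_{11}$ whose nonzero brackets (up to skew-symmetry) are: $[e_1,e_i]=e_{i+1}$ for $2\le i\le 10$; $[e_2,e_3]=e_5+\alpha e_6$, $[e_2,e_4]=e_6+\alpha e_7$, $[e_2,e_5]=-e_7+(\alpha-\beta)e_8$, $[e_2,e_6]=-3e_8+(\alpha-2\beta)e_9$, $[e_2,e_7]=-2e_9-\tfrac14(5\alpha+7\beta)e_{10}+\tfrac1{16}(27\alpha^2+12\alpha\beta+\beta^2)e_{11}$, $[e_2,e_8]=2e_{10}-\tfrac14(23\alpha+\beta)e_{11}$, $[e_2,e_9]=-e_{11}$; $[e_3,e_4]=2e_7+\beta e_8$, $[e_3,e_5]=2e_8+\beta e_9$, $[e_3,e_6]=-e_9+\tfrac14(9\alpha-\beta)e_{10}-\tfrac1{16}(27\alpha^2+12\alpha\beta+\beta^2)e_{11}$, $[e_3,e_7]=-4e_{10}+\tfrac32(3\alpha-\beta)e_{11}$, $[e_3,e_8]=3e_{11}$; $[e_4,e_5]=3e_9-\tfrac14(9\alpha-5\beta)e_{10}+\tfrac1{16}(27\alpha^2+12\alpha\beta+\beta^2)e_{11}$,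 $[e_4,e_6]=3e_{10}-\tfrac14(9\alpha-5\beta)e_{11}$, $[e_4,e_7]=-7e_{11}$; $[e_5,e_6]=10e_{11}$; all other brackets $[e_i,e_j]$ with $i<j$ are zero. Its center is $\mathfrak{z}=\mathrm{span}\{e_{11}\}$. A Lie algebra is characteristically nilpotent if all its derivations are nilpotent. *)

From HB Require Import structures.
From mathcomp Require Import all_boot all_order all_algebra.
From mathcomp Require Import reals.

Set Implicit Arguments. Unset Strict Implicit. Unset Printing Implicit Defensive.
Import Order.TTheory GRing.Theory Num.Theory.
Local Open Scope ring_scope.

Section LieDefs.
Variable R : realType.

(* The basis vector e_k of R^11, with 1-based index k (1 <= k <= 11). *)
Definition E (k : nat) : 'rV[R]_11 := \row_(j < 11) (j == k.-1 :> nat)%:R.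

(* Nonzero brackets [e_i, e_j] for 1 <= i < j <= 11 (1-based), g(alpha,beta). *)
Definition bup (a b : R) (i j : nat) : 'rV[R]_11 :=
  if i == 1%N then (if (2 <= j <= 10)%N then E j.+1 else 0) else
  match i, j with
  | 2, 3 => E 5 + a *: E 6
  | 2, 4 => E 6 + a *: E 7
  | 2, 5 => - E 7 + (a - b) *: E 8
  | 2, 6 => - (3%:R *: E 8) + (a - 2%:R * b) *: E 9
  | 2, 7 => - (2%:R *: E 9) - ((5%:R * a + 7%:R * b) / 4%:R) *: E 10
            + ((27%:R * a ^+ 2 + 12%:R * a * b + b ^+ 2) / 16%:R) *: E 11
  | 2, 8 => 2%:R *: E 10 - ((23%:R * a + b) / 4%:R) *: E 11
  | 2, 9 => - E 11
  | 3, 4 => 2%:R *: E 7 + b *: E 8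
  | 3, 5 => 2%:R *: E 8 + b *: E 9
  | 3, 6 => - E 9 + ((9%:R * a - b) / 4%:R) *: E 10
            - ((27%:R * a ^+ 2 + 12%:R * a * b + b ^+ 2) / 16%:R) *: E 11
  | 3, 7 => - (4%:R *: E 10) + ((3%:R / 2%:R) * (3%:R * a - b)) *: E 11
  | 3, 8 => 3%:R *: E 11
  | 4, 5 => 3%:R *: E 9 - ((9%:R * a - 5%:R * b) / 4%:R) *: E 10
            + ((27%:R * a ^+ 2 + 12%:R * a * b + b ^+ 2) / 16%:R) *: E 11
  | 4, 6 => 3%:R *: E 10 - ((9%:R * a - 5%:R * b) / 4%:R) *: E 11
  | 4, 7 => - (7%:R *: E 11)
  | 5, 6 => 10%:R *: E 11
  | _, _ => 0
  end.

Definition cst (a b : R) (i j : nat) : 'rV[R]_11 :=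
  if (i < j)%N then bup a b i j else if (j < i)%N then - bup a b j i else 0.

Definition gbr (a b : R) (x y : 'rV[R]_11) : 'rV[R]_11 :=
  \sum_(i < 11) \sum_(j < 11) (x 0 i * y 0 j) *: cst a b i.+1 j.+1.

Definition center (a b : R) (z : 'rV[R]_11) : Prop :=
  forall x, gbr a b z x = 0.

(* Quotient g / span{e_11}: coordinates w.r.t. the images of e_1..e_10.
   proj is the canonical projection, lift a section of it. *)
Definition proj (v : 'rV[R]_11) : 'rV[R]_10 := \row_(j < 10) v 0 (widen_ord (leqnSn 10) j).
Definition lift (v : 'rV[R]_10) : 'rV[R]_11 :=
  \row_(j < 11) (if (j < 10)%N then v 0 (inord j) else 0).

Definition qbr (a b : R) (x y : 'rV[R]_10) : 'rV[R]_10 :=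
  proj (gbr a b (lift x) (lift y)).

End LieDefs.

(* Derivations of an n-dimensional algebra (R^n, br); a linear map is a
   matrix acting on row vectors on the right. *)
Definition is_derivation (R : pzRingType) (n : nat)
  (br : 'rV[R]_n -> 'rV[R]_n -> 'rV[R]_n) (D : 'M[R]_n) : Prop :=
  forall x y, br x y *m D = br (x *m D) y + br x (y *m D).

Definition nilpotent_mx (R : pzRingType) (n : nat) (D : 'M[R]_n) : Prop :=
  exists k : nat, D ^+ k = 0.

Definition char_nilpotent (R : pzRingType) (n : nat)
  (br : 'rV[R]_n -> 'rV[R]_n -> 'rV[R]_n) : Prop :=
  forall D : 'M[R]_n, is_derivation br D -> nilpotent_mx D.

(* For alpha = beta = 0 the bracket of g/z is graded, [e_i, e_j] in R e_(i+j),
   so diag(1, ..., 10) is a derivation, and it is not nilpotent.  In general the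
   bracket only respects the filtration: [e_i, e_j] lies in the span of the e_k
   with k >= i + j.  Writing the derivation identity for x = e_1, whose bracket
   shifts e_k to e_(k+1), gives a recurrence along the rows of the matrix of a
   derivation D; it shows that D preserves the filtration and acts on e_i as
   i * lambda modulo higher terms.  The components of the derivation identity
   one and two steps above the graded part then give, with s the coefficient of
   e_2 in D e_1, the relations 2 s = - alpha lambda, 6 s = beta lambda and
   (9 alpha - 22 beta) s = 0.  If lambda <> 0 they force beta = -3 alpha and
   alpha s = 0, hence alpha = beta = 0.  So for (alpha, beta) <> (0, 0) every
   derivation strictly raises the filtration and is nilpotent. *)

From Pilot Require Import Defs.
From HB Require Import structures.
From mathcomp Require Import all_boot all_order all_algebra.
From mathcomp Require Import reals.
From mathcomp Require Import ring lra zify.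

Set Implicit Arguments. Unset Strict Implicit. Unset Printing Implicit Defensive.
Import Order.TTheory GRing.Theory Num.Theory.
Local Open Scope ring_scope.

Lemma eq_char_nilpotent (R : pzRingType) (n : nat)
    (br1 br2 : 'rV[R]_n -> 'rV[R]_n -> 'rV[R]_n) :
  br1 =2 br2 -> char_nilpotent br1 <-> char_nilpotent br2.
Proof.
move=> e; split=> cn D dD; apply: cn => x y; move: (dD x y); by rewrite !e.
Qed.

Lemma strictly_upper_nilpotent (R : pzRingType) (n : nat) (D : 'M[R]_n) :
  (forall i k : 'I_n, (k <= i)%N -> D i k = 0) -> D ^+ n = 0.
Proof.
move=> D_upper.
suff D_pow : forall p (i k : 'I_n), (k < i + p)%N -> (D ^+ p) i k = 0.
  by apply/matrixP => i k; rewrite D_pow ?mxE //; have := ltn_ord k; lia.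
elim=> [|p IHp] i k lt_k_ip.
  by rewrite expr0 mxE; case: eqVneq lt_k_ip => [->|]; rewrite ?addn0 ?ltnn.
rewrite exprSr mxE big1 // => l _.
have [lt_l_ip|le_ip_l] := ltnP l (i + p); first by rewrite IHp ?mul0r.
by rewrite D_upper ?mulr0 //; lia.
Qed.

Lemma sum_indicator (R : pzSemiRingType) (n : nat) (P : pred nat) (F : nat -> R) (i : nat) :
  \sum_(k < n) F k * (P k && (k == i :> nat))%:R = ((i < n)%N && P i)%:R * F i.
Proof.
under eq_bigr do rewrite mulr_natr mulrb.
by rewrite -big_mkcond big_ord1_cond_eq; case: (_ && _); rewrite ?mul1r ?mul0r.
Qed.

Lemma sum_ord_widen (R : nmodType) (n : nat) (F : 'I_n.+1 -> R) : F ord_max = 0 ->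
  \sum_(i < n.+1) F i = \sum_(i < n) F (widen_ord (leqnSn n) i).
Proof. by move=> F_max; rewrite big_ord_recr /= F_max addr0. Qed.

Definition degree_mx (R : pzSemiRingType) (n : nat) : 'M[R]_n := diag_mx (\row_i i.+1%:R).

Lemma degree_mx_not_nilpotent (R : nzRingType) (n : nat) : ~ nilpotent_mx (degree_mx R n.+1).
Proof.
have e0_fixed : ('e_0 : 'rV[R]_n.+1) *m degree_mx R n.+1 = 'e_0.
  by rewrite -rowE row_diag_mx mxE scale1r.
case=> k Dk_eq0.
have : ('e_0 : 'rV[R]_n.+1) *m degree_mx R n.+1 ^+ k = 'e_0.
  elim: k {Dk_eq0} => [|k IHk]; first by rewrite expr0 mulmx1.
  by rewrite exprSr -mulmxE mulmxA IHk e0_fixed.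
rewrite Dk_eq0 mulmx0 => /rowP/(_ 0); rewrite !mxE eqxx /= => /eqP.
by rewrite eq_sym oner_eq0.
Qed.

Section StructureConstants.
Variables (R : comPzRingType) (n : nat) (c : 'I_n -> 'I_n -> 'I_n -> R).

Definition sc_bracket (x y : 'rV[R]_n) : 'rV[R]_n :=
  \row_m \sum_i \sum_j x 0 i * y 0 j * c i j m.

Lemma sum_unit_rowl (i : 'I_n) (F : 'I_n -> R) : \sum_k ('e_i : 'rV[R]_n) 0 k * F k = F i.
Proof.
rewrite (bigD1 i) //= big1 ?addr0 => [|k /negbTE nki]; first by rewrite mxE !eqxx mul1r.
by rewrite mxE nki mul0r.
Qed.

Lemma sc_bracket_unitl i y : sc_bracket 'e_i y = \row_m \sum_j y 0 j * c i j m.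
Proof.
apply/rowP => m; rewrite !mxE.
under eq_bigr => k _ do (under eq_bigr do rewrite -mulrA; rewrite -mulr_sumr).
exact: sum_unit_rowl.
Qed.

Lemma sc_bracket_unitr x j : sc_bracket x 'e_j = \row_m \sum_i x 0 i * c i j m.
Proof.
apply/rowP => m; rewrite !mxE; apply: eq_bigr => i _.
rewrite -(sum_unit_rowl j (fun k => x 0 i * c i k m)); apply: eq_bigr => k _; ring.
Qed.

Lemma sc_bracket_unit i j : sc_bracket 'e_i 'e_j = \row_m c i j m.
Proof. by apply/rowP => m; rewrite sc_bracket_unitr !mxE sum_unit_rowl. Qed.

Lemma derivation_sc_coord (D : 'M[R]_n) : is_derivation sc_bracket D ->
  forall i j m, \sum_l c i j l * D l m
                = \sum_k D i k * c k j m + \sum_k D j k * c i k m.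
Proof.
move=> dD i j m; have /rowP/(_ m) := dD 'e_i 'e_j.
rewrite -!rowE sc_bracket_unit sc_bracket_unitr sc_bracket_unitl !mxE.
have row_sum (A : 'M[R]_n) k (F : 'I_n -> R) :
    \sum_l row k A 0 l * F l = \sum_l A k l * F l.
  by apply: eq_bigr => l _; rewrite mxE.
by rewrite !row_sum => <-; apply: eq_bigr => l _; rewrite mxE.
Qed.

Lemma degree_mx_derivation :
    (forall i j m, c i j m != 0 -> m.+1 = (i.+1 + j.+1)%N) ->
  is_derivation sc_bracket (degree_mx R n).
Proof.
move=> c_graded x y; apply/rowP => m.
rewrite /sc_bracket /degree_mx !mul_mx_diag !mxE -big_split mulr_suml.
apply: eq_bigr => i _; rewrite -big_split mulr_suml; apply: eq_bigr => j _.
rewrite !mxE /=; have [->|/c_graded deg] := eqVneq (c i j m) 0.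
  by rewrite !(mulr0, mul0r, addr0).
rewrite deg natrD; ring.
Qed.

End StructureConstants.

(* [qcoef a b i j k] is the coefficient of e_(k+1) in [e_(i+1), e_(j+1)] modulo
   e_11: indices are shifted down by one so that concrete entries compute. *)
Section QuotientTable.
Variables (R : fieldType) (a b : R).

Definition qcoef_up (i j k : nat) : R :=
  match i, j, k with
  | 0, 1, 2 | 0, 2, 3 | 0, 3, 4 | 0, 4, 5 | 0, 5, 6 | 0, 6, 7 | 0, 7, 8 | 0, 8, 9 => 1
  | 1, 2, 4 => 1 | 1, 2, 5 => a
  | 1, 3, 5 => 1 | 1, 3, 6 => a
  | 1, 4, 6 => -1 | 1, 4, 7 => a - b
  | 1, 5, 7 => -3 | 1, 5, 8 => a - 2 * b
  | 1, 6, 8 => -2 | 1, 6, 9 => - ((5 * a + 7 * b) / 4)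
  | 1, 7, 9 => 2
  | 2, 3, 6 => 2 | 2, 3, 7 => b
  | 2, 4, 7 => 2 | 2, 4, 8 => b
  | 2, 5, 8 => -1 | 2, 5, 9 => (9 * a - b) / 4
  | 2, 6, 9 => -4
  | 3, 4, 8 => 3 | 3, 4, 9 => - ((9 * a - 5 * b) / 4)
  | 3, 5, 9 => 3
  | _, _, _ => 0
  end.

Definition qcoef (i j k : nat) : R :=
  if (i < j)%N then qcoef_up i j k else if (j < i)%N then - qcoef_up j i k else 0.

Lemma qcoef_up_filtration i j k : (k <= i + j)%N -> qcoef_up i j k = 0.
Proof.
by move: i j k => [|[|[|[|i]]]] [|[|[|[|[|[|[|[|[|[|j]]]]]]]]]] [|[|[|[|[|[|[|[|[|[|k]]]]]]]]]].
Qed.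

Lemma qcoef_filtration i j k : (k <= i + j)%N -> qcoef i j k = 0.
Proof.
move=> le_k_ij; rewrite /qcoef.
by case: ltngtP => _ //; rewrite qcoef_up_filtration ?oppr0 // addnC.
Qed.

Lemma qcoef_e1 j k : qcoef 0 j k = ((0 < j < 9)%N && (k == j.+1))%:R.
Proof.
rewrite /qcoef /=; case: j => [|j] //=.
by move: j k => [|[|[|[|[|[|[|[|[|j]]]]]]]]] [|[|[|[|[|[|[|[|[|[|k]]]]]]]]]].
Qed.

Lemma qcoef_e1r k m : qcoef 0 k m = ((0 < k < 9)%N && (k == m.-1))%:R.
Proof. by rewrite qcoef_e1; case: m => [|m]; [case: k | rewrite eqSS eq_sym]. Qed.

End QuotientTable.

Lemma qcoef_up_graded (R : fieldType) i j k :
  k != (i + j).+1 -> qcoef_up (0 : R) 0 i j k = 0.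
Proof.
move: i j k => [|[|[|[|i]]]] [|[|[|[|[|[|[|[|[|[|j]]]]]]]]]] [|[|[|[|[|[|[|[|[|[|k]]]]]]]]]] //=;
  by rewrite ?(mulr0, subr0, mul0r, addr0, oppr0).
Qed.

Lemma qcoef_graded (R : fieldType) i j k :
  qcoef (0 : R) 0 i j k != 0 -> k.+1 = (i.+1 + j.+1)%N.
Proof.
apply: contraNeq => /eqP k_ij; rewrite /qcoef.
by case: ltngtP => _ //; rewrite qcoef_up_graded ?oppr0 //; apply/eqP; lia.
Qed.

Definition qcoefs (R : fieldType) (a b : R) (i j k : 'I_10) : R := qcoef a b i j k.

Section QuotientBracket.
Variables (R : realType) (a b : R).

Lemma bup_qcoef_up i j (k : 'I_11) : (i < j)%N -> (j < 10)%N -> (k < 10)%N ->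
  bup a b i.+1 j.+1 0 k = qcoef_up a b i j k.
Proof.
case: k => k lt_k11 /= lt_ij lt_j10 lt_k10.
move: i lt_ij => [|[|[|[|[|[|[|[|[|[|i]]]]]]]]]] lt_ij; last by lia.
all: move: j lt_ij lt_j10 => [|[|[|[|[|[|[|[|[|[|j]]]]]]]]]] lt_ij lt_j10; try by lia.
all: move: k lt_k11 lt_k10 => [|[|[|[|[|[|[|[|[|[|k]]]]]]]]]] lt_k11 lt_k10; try by lia.
all: rewrite /bup /E /= !mxE /=; ring.
Qed.

Lemma cst_qcoef i j (k : 'I_11) : (i < 10)%N -> (j < 10)%N -> (k < 10)%N ->
  cst a b i.+1 j.+1 0 k = qcoef a b i j k.
Proof.
move=> lt_i10 lt_j10 lt_k10; rewrite /cst /qcoef !ltnS.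
by case: ltngtP => lt; rewrite ?mxE ?bup_qcoef_up.
Qed.

Lemma qbr_sc x y : qbr a b x y = sc_bracket (qcoefs a b) x y.
Proof.
have lift_max (z : 'rV[R]_10) : Defs.lift z 0 ord_max = 0 by rewrite mxE.
have lift_widen (z : 'rV[R]_10) i : Defs.lift z 0 (widen_ord (leqnSn 10) i) = z 0 i.
  by rewrite mxE /= ltn_ord inord_val.
apply/rowP => m; rewrite /qbr /gbr !mxE summxE sum_ord_widen; last first.
  by rewrite summxE big1 // => j _; rewrite mxE lift_max !mul0r.
apply: eq_bigr => i _; rewrite summxE sum_ord_widen; last first.
  by rewrite lift_max mulr0 scale0r mxE.
by apply: eq_bigr => j _; rewrite mxE !lift_widen cst_qcoef ?(ltn_ord i, ltn_ord j, ltn_ord m).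
Qed.

End QuotientBracket.

(* [d i k] is the coefficient of e_(k+1) in D e_(i+1), D acting on row vectors. *)
Section QuotientDerivation.
Variables (R : realFieldType) (a b : R) (d : nat -> nat -> R).
Hypothesis d_der : forall i j m, (i < 10)%N -> (j < 10)%N -> (m < 10)%N ->
  \sum_(l < 10) qcoef a b i j l * d l m
  = \sum_(k < 10) d i k * qcoef a b k j m + \sum_(k < 10) d j k * qcoef a b i k m.
Arguments d_der : clear implicits.

(* The sum is the m-th coordinate of [D e_1, e_(j+1)]. *)
Lemma ad_e1_recurrence j m : (0 < j < 9)%N -> (m < 10)%N ->
  d j.+1 m = (1 < m)%:R * d j m.-1 + \sum_(k < 10) d 0 k * qcoef a b k j m.
Proof.
move=> j_range lt_m10; have lt_j10 : (j < 10)%N by lia.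
have := d_der 0 j m isT lt_j10 lt_m10.
under eq_bigr do rewrite qcoef_e1 j_range mulrC.
under [X in _ = _ + X]eq_bigr do rewrite qcoef_e1r.
rewrite (@sum_indicator _ _ xpredT (fun l => d l m)) andbT.
rewrite (@sum_indicator _ _ (fun k => 0 < k < 9)%N (d j)).
rewrite (_ : (j.+1 < 10)%N) ?mul1r; last by lia.
rewrite (_ : (m.-1 < 10)%N && (0 < m.-1 < 9)%N = (1 < m)%N) 1?addrC //.
by apply/idP/idP; lia.
Qed.

Lemma De1_bracket_trunc j m p : (m <= p + j)%N -> (p <= 10)%N ->
  \sum_(k < 10) d 0 k * qcoef a b k j m = \sum_(k < p) d 0 k * qcoef a b k j m.
Proof.
move=> le_m_pj le_p10; rewrite -(subnKC le_p10) big_split_ord /=.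
by rewrite [X in _ + X]big1 ?addr0 // => k _; rewrite qcoef_filtration ?mulr0 //; lia.
Qed.

Lemma d_below_diagSS i k : (i < 8)%N -> (k <= i.+1)%N -> d i.+2 k = 0.
Proof.
elim: i k => [|i IHi] k lt_i8 le_k.
all: rewrite ad_e1_recurrence ?(De1_bracket_trunc (p:=0)) ?big_ord0 ?addr0 //; try lia.
  by rewrite ltnNge le_k /= mul0r.
case: ltnP => [lt_1k|_]; last by rewrite mul0r.
by rewrite IHi ?mulr0 //; lia.
Qed.

Local Ltac expand_coord_eq :=
  rewrite !big_ord_recr !big_ord0 /= /qcoef /=
          ?(mul0r, mulr0, add0r, addr0, mul1r, mulr1, oppr0).

Lemma d10_eq0 : d 1 0 = 0.
Proof.
have := d_der 1 2 3 isT isT isT; expand_coord_eq.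
rewrite !d_below_diagSS //; lra.
Qed.

Lemma d_below_diag i k : (k < i < 10)%N -> d i k = 0.
Proof.
case: i => [|[|i]] /andP[lt_ki lt_i10] //; last by rewrite d_below_diagSS //; lia.
have -> : k = 0%N by lia.
exact: d10_eq0.
Qed.

Lemma d_diag_rec j : (0 < j < 9)%N -> d j.+1 j.+1 = d j j + d 0 0.
Proof.
move=> j_range; rewrite ad_e1_recurrence ?(De1_bracket_trunc (p:=1)) //; try lia.
rewrite big_ord1 qcoef_e1 j_range eqxx ltnS.
by case/andP: j_range => -> _; rewrite mul1r mulr1.
Qed.

Lemma d11E : d 1 1 = 2 * d 0 0.
Proof.
have := d_der 1 2 4 isT isT isT; expand_coord_eq; rewrite (@d_below_diagSS 3 4) //.
have := @d_diag_rec 1 isT; have := @d_diag_rec 2 isT; have := @d_diag_rec 3 isT.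
lra.
Qed.

Lemma d_diagE i : (i < 9)%N -> d i.+1 i.+1 = i.+2%:R * d 0 0.
Proof.
elim: i => [_|i IHi lt_i9]; first exact: d11E.
rewrite d_diag_rec ?IHi; try lia.
by rewrite [in RHS]mulrSr [in RHS]mulrDl mul1r.
Qed.

Lemma d_superdiag_rec j : (j < 7)%N ->
  d j.+2 j.+3 = d j.+1 j.+2 + qcoef a b 1 j.+1 j.+3 * d 0 1.
Proof.
move=> lt_j7; rewrite ad_e1_recurrence ?(De1_bracket_trunc (p:=2)) //; try lia.
rewrite !big_ord_recr big_ord0 /= add0r qcoef_e1 gtn_eqF // andbF.
by rewrite mul1r mulr0 add0r mulrC.
Qed.

Lemma d_superdiag2_rec j : (j < 6)%N ->
  d j.+2 j.+4 = d j.+1 j.+3 + qcoef a b 1 j.+1 j.+4 * d 0 1 + qcoef a b 2 j.+1 j.+4 * d 0 2.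
Proof.
move=> lt_j6; rewrite ad_e1_recurrence ?(De1_bracket_trunc (p:=3)) //; try lia.
rewrite !big_ord_recr big_ord0 /= add0r qcoef_e1 gtn_eqF // andbF.
by rewrite mul1r mulr0 add0r addrA (mulrC (d 0 1)) (mulrC (d 0 2)).
Qed.

(* Coordinates (i, j, m) of the derivation identity with m = i + j + 2, resp.
   m = i + j + 3: by the lemmas above they only involve d 0 0 and the first two
   superdiagonals of D. *)
Lemma first_order : 2 * d 0 1 = - (a * d 0 0) /\ 6 * d 0 1 = b * d 0 0.
Proof.
have := d_der 1 2 5 isT isT isT; have := d_der 2 3 7 isT isT isT.
expand_coord_eq; rewrite !d_diagE // !d_superdiag_rec // /qcoef /=.
move=> ? ?; split; lra.
Qed.

Lemma second_order : (9 * a - 22 * b) * d 0 1 = 0.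
Proof.
have := d_der 1 2 6 isT isT isT; have := d_der 1 4 8 isT isT isT.
expand_coord_eq.
rewrite !d_superdiag_rec // !d_superdiag2_rec // /qcoef /=.
move=> ? ?; lra.
Qed.

Lemma d00_eq0 : (a, b) <> (0, 0) -> d 0 0 = 0.
Proof.
move=> ab; apply/eqP; apply: contraT => d00_neq0; case: ab.
have [s0_a s0_b] := first_order.
have b_eq : b = -3 * a by apply: (mulIf d00_neq0); lra.
have a_s0 : a * d 0 1 = 0 by have := second_order; rewrite b_eq; lra.
have a0 : a = 0.
  move: a_s0 => /eqP; rewrite mulf_eq0 => /orP[/eqP //|/eqP s0].
  by apply: (mulIf d00_neq0); lra.
by rewrite b_eq a0 mulr0.
Qed.

Lemma d_strictly_upper : (a, b) <> (0, 0) -> forall i k, (k <= i < 10)%N -> d i k = 0.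
Proof.
move=> ab i k /andP[]; rewrite leq_eqVlt => /orP[/eqP -> lt_i10|lt_ki lt_i10].
  by case: i lt_i10 => [|i] lt_i10; rewrite ?d_diagE ?d00_eq0 ?mulr0.
by apply: d_below_diag; rewrite lt_ki.
Qed.

End QuotientDerivation.

Lemma qderivation_strictly_upper (R : realFieldType) (a b : R) (D : 'M[R]_10) :
  is_derivation (sc_bracket (qcoefs a b)) D -> (a, b) <> (0, 0) ->
  forall i k : 'I_10, (k <= i)%N -> D i k = 0.
Proof.
move=> dD ab i k le_ki; pose d i k := D (inord i) (inord k).
suff d_der : forall i j m, (i < 10)%N -> (j < 10)%N -> (m < 10)%N ->
    \sum_(l < 10) qcoef a b i j l * d l m
    = \sum_(k < 10) d i k * qcoef a b k j m + \sum_(k < 10) d j k * qcoef a b i k m.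
  have := @d_strictly_upper R a b d d_der ab i k; rewrite le_ki ltn_ord => /(_ isT).
  by rewrite /d !inord_val.
move=> i' j m lt_i10 lt_j10 lt_m10.
have := derivation_sc_coord dD (inord i') (inord j) (inord m); rewrite /qcoefs !inordK // => e.
rewrite /d; under eq_bigr do rewrite inord_val.
under [in RHS]eq_bigr do rewrite inord_val; under [X in _ + X]eq_bigr do rewrite inord_val.
exact: e.
Qed.

Theorem proposition4p4 (R : realType) (a b : R) :
  char_nilpotent (qbr a b) <-> (a, b) <> (0, 0).
Proof.
rewrite (eq_char_nilpotent (@qbr_sc R a b)); split.
  move=> cn [a0 b0]; subst a b.
  apply: (@degree_mx_not_nilpotent R 9); apply: cn.
  by apply: degree_mx_derivation => i j k; apply: qcoef_graded.
move=> ab D dD; exists 10%N; apply: strictly_upper_nilpotent.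
exact: qderivation_strictly_upper dD ab.
Qed.
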